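(* Let $K\ge1$, $A=\{1,\dots,K\}$, let $d\ge1$ be an integer and $\eta>0$ with $\eta\le \frac{1}{Ke(d+1)}$. Consider the exponentially weighted update: $w_1(i)=1$, $W_t=\sum_{j\in A}w_t(j)$, $p_t(i)=w_t(i)/W_t$, $w_{t+1}(i)=p_t(i)\exp(-\eta\widehat{\ell}_t(i))$, where the loss estimates have the form $$\widehat{\ell}_t(i)=\begin{cases}\dfrac{\ell_{t-d}(i)}{q_{t-d}(i)}\,B_{t-d}(i) & \text{if } t>d,\\[2mm] 0&\text{otherwise,}\end{cases}$$ with $\ell_s(i)\in[0,1]$, $B_s(i)\in\{0,1\}$, and $q_s(i)$ numbers satisfying $q_s(i)\ge p_s(i)>0$ for all $s\ge1$, $i\in A$. Then for all $t\ge1$ and all $i\in A$, $$p_{t+1}(i)\le\Bigl(1+\frac1d\Bigr)p_t(i).$$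
   Context: The statement holds deterministically, for every realization of the $\ell_s,B_s,q_s$ satisfying the stated conditions. *)

From Stdlib Require Import Reals Lra Lia Arith List.
Open Scope R_scope.

Definition sumA (K : nat) (f : nat -> R) : R :=
  fold_right Rplus 0 (map f (seq 1 K)).

Definition lhat (d : nat) (l B q : nat -> nat -> R) (t i : nat) : R :=
  if Nat.ltb d t then l (t - d)%nat i / q (t - d)%nat i * B (t - d)%nat i else 0.

(* Weights w_t(i) for t >= 1 (the value at t = 0 is an unused junk value 1):
   w_1(i) = 1,  w_{t+1}(i) = p_t(i) * exp(-eta * lhat_t(i)),
   with p_t(i) = w_t(i) / W_t and W_t = sum_{j in A} w_t(j). *)
Fixpoint w (K : nat) (eta : R) (d : nat) (l B q : nat -> nat -> R) (t : nat)
  : nat -> R :=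
  match t with
  | S ((S _) as m) => fun i =>
      (w K eta d l B q m i / sumA K (w K eta d l B q m))
        * exp (- eta * lhat d l B q m i)
  | _ => fun _ => 1
  end.

Definition Wt (K : nat) (eta : R) (d : nat) (l B q : nat -> nat -> R) (t : nat) : R :=
  sumA K (w K eta d l B q t).

Definition p (K : nat) (eta : R) (d : nat) (l B q : nat -> nat -> R) (t i : nat) : R :=
  w K eta d l B q t i / Wt K eta d l B q t.

From Stdlib Require Import Reals Lra Lia Arith List.
Open Scope R_scope.

(* The total weight after a round is [sum_j p_t(j) exp(-eta lhat_t(j)) >= 1 - eta sum_j p_t(j) lhat_t(j)].
   Since lhat_t(j) <= 1 / p_{t-d}(j) and, inductively, p_t(j) <= (1 + 1/d)^d p_{t-d}(j) <= e p_{t-d}(j),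
   each term p_t(j) lhat_t(j) is at most e, so the total weight is at least 1 - eta K e >= d / (d + 1).
   Dividing the non-increased weight p_t(i) exp(-eta lhat_t(i)) <= p_t(i) by it costs a factor 1 + 1/d. *)

Lemma sum_map_le (s : list nat) (f g : nat -> R) :
  (forall j, In j s -> f j <= g j) ->
  fold_right Rplus 0 (map f s) <= fold_right Rplus 0 (map g s).
Proof.
  induction s as [|a s IH]; intros Hfg; simpl; [lra|].
  apply Rplus_le_compat.
  - apply Hfg; left; reflexivity.
  - apply IH; intros j Hj; apply Hfg; right; exact Hj.
Qed.

Lemma sum_map_const (s : list nat) (c : R) :
  fold_right Rplus 0 (map (fun _ => c) s) = INR (length s) * c.
Proof.
  induction s as [|a s IH]; simpl length; [simpl; ring|].
  rewrite S_INR; simpl; rewrite IH; ring.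
Qed.

Lemma sumA_le (K : nat) (f g : nat -> R) :
  (forall j, (1 <= j <= K)%nat -> f j <= g j) -> sumA K f <= sumA K g.
Proof.
  intros Hfg; apply sum_map_le; intros j Hj; apply in_seq in Hj; apply Hfg; lia.
Qed.

Lemma sumA_ext (K : nat) (f g : nat -> R) :
  (forall j, (1 <= j <= K)%nat -> f j = g j) -> sumA K f = sumA K g.
Proof.
  intros Hfg; apply Rle_antisym; apply sumA_le; intros j Hj; rewrite Hfg; auto; lra.
Qed.

Lemma sumA_const (K : nat) (c : R) : sumA K (fun _ => c) = INR K * c.
Proof. unfold sumA; rewrite sum_map_const, length_seq; reflexivity. Qed.

Lemma sumA_div (K : nat) (f : nat -> R) (c : R) :
  sumA K (fun j => f j / c) = sumA K f / c.
Proof.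
  unfold sumA; induction (seq 1 K) as [|a s IH]; simpl; [|rewrite IH]; unfold Rdiv; ring.
Qed.

Lemma sumA_affine (K : nat) (f g : nat -> R) (a : R) :
  sumA K (fun j => f j * (1 - a * g j)) = sumA K f - a * sumA K (fun j => f j * g j).
Proof. unfold sumA; induction (seq 1 K) as [|b s IH]; simpl; [|rewrite IH]; ring. Qed.

Lemma sumA_pos (K : nat) (f : nat -> R) :
  (1 <= K)%nat -> (forall j, (1 <= j <= K)%nat -> 0 < f j) -> 0 < sumA K f.
Proof.
  intros HK Hf; destruct K as [|K]; [lia|]; unfold sumA; simpl.
  assert (Hrest : 0 <= fold_right Rplus 0 (map f (seq 2 K))).
  { replace 0 with (fold_right Rplus 0 (map (fun _ => 0) (seq 2 K))) at 1
      by (rewrite sum_map_const; ring).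
    apply sum_map_le; intros j Hj; apply in_seq in Hj; apply Rlt_le, Hf; lia. }
  assert (0 < f 1%nat) by (apply Hf; lia); lra.
Qed.

Lemma pow_ratio_bound (f : nat -> R) (c : R) (n k : nat) : 0 <= c ->
  (forall s, (n <= s < n + k)%nat -> f (S s) <= c * f s) ->
  f (n + k)%nat <= c ^ k * f n.
Proof.
  intros Hc; induction k as [|k IH]; intros Hstep.
  - rewrite Nat.add_0_r; simpl; lra.
  - rewrite Nat.add_succ_r.
    assert (Hk : f (n + k)%nat <= c ^ k * f n) by (apply IH; intros; apply Hstep; lia).
    apply Rle_trans with (c * f (n + k)%nat); [apply Hstep; lia|].
    simpl; rewrite Rmult_assoc; apply Rmult_le_compat_l; assumption.
Qed.

Lemma one_plus_inv_INR_pos (n : nat) : (1 <= n)%nat -> 0 < 1 + 1 / INR n.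
Proof.
  intros Hn; assert (0 < INR n) by (apply (lt_INR 0); lia).
  assert (0 < 1 / INR n) by (apply Rdiv_lt_0_compat; lra); lra.
Qed.

Lemma pow_1_plus_inv_le_exp1 (n : nat) : (1 <= n)%nat -> (1 + 1 / INR n) ^ n <= exp 1.
Proof.
  intros Hn; assert (HnR : 0 < INR n) by (apply (lt_INR 0); lia).
  assert (Hinv : 0 < 1 / INR n) by (apply Rdiv_lt_0_compat; lra).
  apply Rle_trans with (exp (1 / INR n) ^ n).
  - apply pow_incr; split; [lra|apply exp_ineq1_le].
  - rewrite <- Rpower_pow by apply exp_pos.
    unfold Rpower; rewrite ln_exp; right; f_equal; field; lra.
Qed.

Lemma one_le_succ_ratio_mul (n : nat) (x : R) :
  (1 <= n)%nat -> x * (INR n + 1) <= 1 -> 1 <= (1 + 1 / INR n) * (1 - x).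
Proof.
  intros Hn Hx; assert (HnR : 0 < INR n) by (apply (lt_INR 0); lia).
  replace ((1 + 1 / INR n) * (1 - x)) with (1 + (1 - x * (INR n + 1)) / INR n)
    by (field; lra).
  assert (0 <= (1 - x * (INR n + 1)) / INR n) by (apply Rle_mult_inv_pos; lra); lra.
Qed.

Section ExponentialWeights.

Variables (K d : nat) (eta : R) (l B q : nat -> nat -> R).
Hypothesis hK : (1 <= K)%nat.
Hypothesis hd : (1 <= d)%nat.
Hypothesis heta_pos : 0 < eta.
Hypothesis heta_le : eta <= 1 / (INR K * exp 1 * (INR d + 1)).
Hypothesis hl : forall s i, (1 <= s)%nat -> (1 <= i <= K)%nat -> 0 <= l s i <= 1.
Hypothesis hB : forall s i, (1 <= s)%nat -> (1 <= i <= K)%nat -> B s i = 0 \/ B s i = 1.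
Hypothesis hq : forall s i, (1 <= s)%nat -> (1 <= i <= K)%nat ->
  p K eta d l B q s i <= q s i /\ 0 < p K eta d l B q s i.

Local Notation weight := (w K eta d l B q).
Local Notation total := (Wt K eta d l B q).
Local Notation prob := (p K eta d l B q).
Local Notation est := (lhat d l B q).

Lemma eta_Ke_mul_succ_le_1 : eta * (INR K * exp 1) * (INR d + 1) <= 1.
Proof.
  assert (HD : 0 < INR K * exp 1 * (INR d + 1)).
  { assert (0 < INR K) by (apply (lt_INR 0); lia).
    pose proof (exp_pos 1); pose proof (pos_INR d).
    apply Rmult_lt_0_compat; [apply Rmult_lt_0_compat|]; lra. }
  rewrite Rmult_assoc.
  apply (Rmult_le_compat_r _ _ _ (Rlt_le _ _ HD)) in heta_le.
  unfold Rdiv in heta_le; rewrite Rmult_1_l, Rinv_l in heta_le by lra.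
  exact heta_le.
Qed.

Lemma weight_succ t i : (1 <= t)%nat ->
  weight (S t) i = prob t i * exp (- eta * est t i).
Proof. intros Ht; destruct t; [lia|reflexivity]. Qed.

Lemma weight_pos t i : (1 <= t)%nat -> (1 <= i <= K)%nat -> 0 < weight t i.
Proof.
  intros Ht Hi; destruct t as [|[|t]]; [lia|simpl; lra|].
  rewrite weight_succ by lia.
  apply Rmult_lt_0_compat; [apply hq; auto; lia|apply exp_pos].
Qed.

Lemma total_pos t : (1 <= t)%nat -> 0 < total t.
Proof. intros Ht; apply sumA_pos; auto; intros; apply weight_pos; auto. Qed.

Lemma sumA_prob t : (1 <= t)%nat -> sumA K (prob t) = 1.
Proof.
  intros Ht; unfold p; rewrite sumA_div.
  assert (HW := total_pos t Ht); unfold Wt in *; field; lra.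
Qed.

Lemma est_nonneg t j : (1 <= j <= K)%nat -> 0 <= est t j.
Proof.
  intros Hj; unfold lhat; destruct (Nat.ltb_spec d t) as [Hdt|]; [|lra].
  destruct (hq (t - d) j) as [Hpq Hp]; try lia.
  destruct (hl (t - d) j) as [Hl0 _]; try lia.
  apply Rmult_le_pos.
  - apply Rle_mult_inv_pos; lra.
  - destruct (hB (t - d) j) as [-> | ->]; try lia; lra.
Qed.

Lemma est_le_inv_prob t j : (d < t)%nat -> (1 <= j <= K)%nat ->
  est t j <= / prob (t - d) j.
Proof.
  intros Hdt Hj; unfold lhat; destruct (Nat.ltb_spec d t); [|lia].
  destruct (hq (t - d) j) as [Hpq Hp]; try lia.
  destruct (hl (t - d) j) as [Hl0 Hl1]; try lia.
  apply Rle_trans with (/ q (t - d) j); [|apply Rinv_le_contravar; assumption].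
  assert (Hinv : 0 < / q (t - d) j) by (apply Rinv_0_lt_compat; lra).
  unfold Rdiv; destruct (hB (t - d) j) as [-> | ->]; try lia; nra.
Qed.

Lemma weight_succ_le_prob t i : (1 <= t)%nat -> (1 <= i <= K)%nat ->
  weight (S t) i <= prob t i.
Proof.
  intros Ht Hi; rewrite weight_succ by assumption.
  assert (Hexp : exp (- eta * est t i) <= 1).
  { assert (Hneg : - eta * est t i <= 0)
      by (assert (0 <= est t i) by (apply est_nonneg; assumption); nra).
    rewrite <- exp_0; destruct (Rle_lt_or_eq_dec _ _ Hneg) as [Hlt | ->];
      [left; apply exp_increasing; exact Hlt|right; reflexivity]. }
  assert (0 < prob t i) by (apply hq; assumption); nra.
Qed.

Lemma total_succ_ge t (M : R) : (1 <= t)%nat ->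
  sumA K (fun j => prob t j * est t j) <= M -> 1 - eta * M <= total (S t).
Proof.
  intros Ht HM; unfold Wt.
  rewrite (sumA_ext K _ (fun j => prob t j * exp (- eta * est t j)))
    by (intros j Hj; apply weight_succ; assumption).
  apply Rle_trans with (sumA K (fun j => prob t j * (1 - eta * est t j))).
  - rewrite sumA_affine, sumA_prob by assumption; nra.
  - apply sumA_le; intros j Hj.
    apply Rmult_le_compat_l; [apply Rlt_le, hq; assumption|].
    pose proof (exp_ineq1_le (- eta * est t j)); lra.
Qed.

Lemma prob_mul_est_le_exp1 t j : (1 <= j <= K)%nat ->
  (forall s, (1 <= s < t)%nat -> prob (S s) j <= (1 + 1 / INR d) * prob s j) ->
  prob t j * est t j <= exp 1.
Proof.
  intros Hj Hstable; destruct (Nat.ltb_spec d t) as [Hdt|Htd].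
  - assert (Hc := one_plus_inv_INR_pos d hd).
    assert (Hgrowth : prob t j <= (1 + 1 / INR d) ^ d * prob (t - d) j).
    { replace t with (t - d + d)%nat at 1 by lia.
      apply (pow_ratio_bound (fun s => prob s j)); [lra|intros s Hs; apply Hstable; lia]. }
    destruct (hq (t - d) j) as [_ Hp]; try lia.
    assert (Hpt : 0 < prob t j) by (apply hq; auto; lia).
    apply Rle_trans with (prob t j * / prob (t - d) j).
    + apply Rmult_le_compat_l; [lra|apply est_le_inv_prob; assumption].
    + apply Rle_trans with ((1 + 1 / INR d) ^ d); [|apply pow_1_plus_inv_le_exp1; assumption].
      apply (Rmult_le_reg_r (prob (t - d) j)); [assumption|].
      rewrite Rmult_assoc, Rinv_l by lra; lra.
  - unfold lhat; destruct (Nat.ltb_spec d t); [lia|].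
    rewrite Rmult_0_r; apply Rlt_le, exp_pos.
Qed.

Lemma prob_succ_le t i : (1 <= t)%nat -> (1 <= i <= K)%nat ->
  prob (S t) i <= (1 + 1 / INR d) * prob t i.
Proof.
  revert i; induction t as [t IH] using (well_founded_induction lt_wf); intros i Ht Hi.
  set (c := 1 + 1 / INR d).
  assert (Hsum : sumA K (fun j => prob t j * est t j) <= INR K * exp 1).
  { rewrite <- sumA_const; apply sumA_le; intros j Hj.
    apply prob_mul_est_le_exp1; [assumption|].
    intros s Hs; apply IH; lia. }
  assert (Hx := eta_Ke_mul_succ_le_1).
  assert (HcW : 1 <= c * total (S t)).
  { apply Rle_trans with (c * (1 - eta * (INR K * exp 1))).
    - apply one_le_succ_ratio_mul; assumption.
    - apply Rmult_le_compat_l; [|apply total_succ_ge; assumption].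
      apply Rlt_le, one_plus_inv_INR_pos; assumption. }
  assert (HW : 0 < total (S t)) by (apply total_pos; lia).
  assert (Hw := weight_succ_le_prob t i Ht Hi).
  assert (0 < prob t i) by (apply hq; assumption).
  unfold p at 1; apply (Rmult_le_reg_r (total (S t))); [assumption|].
  unfold Rdiv; rewrite Rmult_assoc, Rinv_l by lra; nra.
Qed.

End ExponentialWeights.

Theorem lemma2 (K d : nat) (eta : R) (l B q : nat -> nat -> R)
  (hK : (1 <= K)%nat) (hd : (1 <= d)%nat)
  (heta_pos : 0 < eta)
  (heta_le : eta <= 1 / (INR K * exp 1 * (INR d + 1)))
  (hl : forall s i, (1 <= s)%nat -> (1 <= i <= K)%nat -> 0 <= l s i <= 1)
  (hB : forall s i, (1 <= s)%nat -> (1 <= i <= K)%nat -> B s i = 0 \/ B s i = 1)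
  (hq : forall s i, (1 <= s)%nat -> (1 <= i <= K)%nat ->
          p K eta d l B q s i <= q s i /\ 0 < p K eta d l B q s i) :
  forall t i, (1 <= t)%nat -> (1 <= i <= K)%nat ->
    p K eta d l B q (S t) i <= (1 + 1 / INR d) * p K eta d l B q t i.
Proof. exact (prob_succ_le K d eta l B q hK hd heta_pos heta_le hl hB hq). Qed.
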